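(* Let $\Phi$ be a channel matrix whose rows $P^1,\dots,P^4\in\Delta^n$ are in general position, let $Q^0$ be the equidistant point from $P^1,\dots,P^4$ with barycentric coordinate $\boldsymbol\lambda^0$, and suppose $\lambda^0_1<0$, $\lambda^0_2<0$, $\lambda^0_3\ge0$, $\lambda^0_4\ge0$. Let $Q^{1(1)}=\pi(Q^0|L(P^2,P^3,P^4))$ and $Q^{1(2)}=\pi(Q^0|L(P^1,P^3,P^4))$ with barycentric coordinates $\boldsymbol\lambda^{1(1)},\boldsymbol\lambda^{1(2)}$ about $P^1,\dots,P^4$, and suppose $\lambda^{1(2)}_1<0$. Suppose further $\lambda^{1(1)}_2<0$, $\lambda^{1(1)}_3\ge0$, $\lambda^{1(1)}_4\ge0$, and let $Q^2=\pi(Q^{1(1)}|L(P^3,P^4))$. Then the output distribution achieving the channel capacity is $Q^\ast=Q^2$ and the channel capacity is $C=D(P^3\|Q^2)$.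
   Context: $\Delta^n=\{Q:Q_j>0,\sum_jQ_j=1\}$, $\bar\Delta^m=\{\boldsymbol\lambda:\lambda_i\ge0,\sum_i\lambda_i=1\}$; $D(Q\|Q')=\sum_jQ_j\log(Q_j/Q'_j)$. Rows are in general position if $P^2-P^1,\dots,P^m-P^1$ are linearly independent. $L(S^1,\dots,S^r)=\{\sum_i\lambda_iS^i:\sum_i\lambda_i=1\}\cap\Delta^n$; for such an affine subspace $L$, $\pi(Q'|L)$ is the unique $Q\in L$ minimizing $D(Q\|Q')$. The barycentric coordinate of $Q\in L(P^1,\dots,P^m)$ is the unique $\boldsymbol\lambda$ with $\sum_i\lambda_i=1$, $Q=\sum_i\lambda_iP^i$. The equidistant point is the unique $Q^0\in L(P^1,\dots,P^m)$ with all $D(P^i\|Q^0)$ equal. Mutual information $I(\boldsymbol\lambda,\Phi)=\sum_{i,j}\lambda_iP^i_j\log(P^i_j/Q_j)$ with $Q=\boldsymbol\lambda\Phi$; capacity $C=\max_{\boldsymbol\lambda\in\bar\Delta^m}I(\boldsymbol\lambda,\Phi)$; the capacity-achieving output distribution is $Q^\ast=\boldsymbol\lambda^\ast\Phi$ for a maximizer $\boldsymbol\lambda^\ast$ (unique). *)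

From HB Require Import structures.
From mathcomp Require Import all_boot all_order all_algebra.
From mathcomp Require Import all_classical all_reals all_analysis.
Set Implicit Arguments. Unset Strict Implicit. Unset Printing Implicit Defensive.
Import Order.TTheory GRing.Theory Num.Theory.
Local Open Scope ring_scope.

Section Defs.
Variable R : realType.

Definition in_simplex (n : nat) (Q : 'I_n -> R) : Prop :=
  (forall j, 0 < Q j) /\ \sum_(j < n) Q j = 1.

Definition in_csimplex (m : nat) (lam : 'I_m -> R) : Prop :=
  (forall i, 0 <= lam i) /\ \sum_(i < m) lam i = 1.

Definition KL (n : nat) (Q Q' : 'I_n -> R) : R :=
  \sum_(j < n) Q j * ln (Q j / Q' j).

(* lam Phi : the combination sum_i lam_i P^i, rows P i of Phi *)
Definition comb (m n : nat) (P : 'I_m -> 'I_n -> R) (lam : 'I_m -> R) : 'I_n -> R :=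
  fun j => \sum_(i < m) lam i * P i j.

Definition general_position (m n : nat) (P : 'I_m.+1 -> 'I_n -> R) : Prop :=
  forall c : 'I_m.+1 -> R,
    (forall j, \sum_(i < m.+1 | i != ord0) c i * (P i j - P ord0 j) = 0) ->
    forall i, i != ord0 -> c i = 0.

Definition in_L (m n : nat) (P : 'I_m -> 'I_n -> R) (S : {set 'I_m})
    (Q : 'I_n -> R) : Prop :=
  (exists lam : 'I_m -> R,
     (forall i, i \notin S -> lam i = 0) /\ \sum_(i < m) lam i = 1 /\
     Q = comb P lam) /\ in_simplex Q.

Definition is_proj (m n : nat) (P : 'I_m -> 'I_n -> R) (S : {set 'I_m})
    (Q' Q : 'I_n -> R) : Prop :=
  in_L P S Q /\ forall Q'', in_L P S Q'' -> KL Q Q' <= KL Q'' Q'.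

Definition barycentric (m n : nat) (P : 'I_m -> 'I_n -> R) (Q : 'I_n -> R)
    (lam : 'I_m -> R) : Prop :=
  \sum_(i < m) lam i = 1 /\ Q = comb P lam.

Definition equidistant (m n : nat) (P : 'I_m -> 'I_n -> R) (Q0 : 'I_n -> R) : Prop :=
  in_L P [set: 'I_m] Q0 /\ forall i i', KL (P i) Q0 = KL (P i') Q0.

Definition mutual_info (m n : nat) (P : 'I_m -> 'I_n -> R) (lam : 'I_m -> R) : R :=
  \sum_(i < m) \sum_(j < n) lam i * P i j * ln (P i j / comb P lam j).

Definition is_capacity (m n : nat) (P : 'I_m -> 'I_n -> R) (C : R) : Prop :=
  (exists lam, in_csimplex lam /\ mutual_info P lam = C) /\
  forall lam, in_csimplex lam -> mutual_info P lam <= C.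

Definition capacity_output (m n : nat) (P : 'I_m -> 'I_n -> R) (Q : 'I_n -> R) : Prop :=
  (exists lam, in_csimplex lam /\
     (forall mu, in_csimplex mu -> mutual_info P mu <= mutual_info P lam) /\
     comb P lam = Q) /\
  forall lam, in_csimplex lam ->
     (forall mu, in_csimplex mu -> mutual_info P mu <= mutual_info P lam) ->
     comb P lam = Q.

End Defs.

Definition r1 : 'I_4 := @Ordinal 4 0 isT.
Definition r2 : 'I_4 := @Ordinal 4 1 isT.
Definition r3 : 'I_4 := @Ordinal 4 2 isT.
Definition r4 : 'I_4 := @Ordinal 4 3 isT.

From HB Require Import structures.
From mathcomp Require Import all_boot all_order all_algebra.
From mathcomp Require Import all_classical all_reals all_analysis.
From mathcomp Require Import ring lra.
Set Implicit Arguments. Unset Strict Implicit. Unset Printing Implicit Defensive.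
Import Order.TTheory GRing.Theory Num.Theory.
Local Open Scope ring_scope.

(* Divergences from the rows behave like squared distances.  The projection
   Q = pi(Q'|L) satisfies a Pythagorean rule: D(P^i||Q') - D(P^i||Q) does not
   depend on the row P^i spanning L, so projecting the equidistant point Q^0
   keeps Q^{1(1)}, Q^{1(2)} and Q^2 equidistant from their rows.  The identity
     sum_i (lam_i - mu_i) (D(P^i||Y) - D(P^i||X)) = D(X||Y) + D(Y||X)
   for X = lam Phi, Y = mu Phi then shows that a row with a negative
   coordinate in X = Q^{1(k)} is no farther from Q^2 than P^3 and P^4, and
   that Q^2 lies on the segment [P^3, P^4].  So Q^2 satisfies the Kuhn-Tucker
   conditions D(P^i||Q^2) <= C with equality on the support, and these
   characterize capacity because I(lam) + D(lam Phi||Q) = sum_i lam_i D(P^i||Q). *)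

Section Divergence.
Variable R : realType.

Lemma ln_le_subr1 (x : R) : 0 < x -> ln x <= x - 1.
Proof.
by move=> x0; have := expR_ge1Dx (ln x); rewrite lnK ?posrE // lerBrDl.
Qed.

Lemma ln_lt_subr1 (x : R) : 0 < x -> x != 1 -> ln x < x - 1.
Proof.
move=> x0 x1; have : ln x != 0 by rewrite ln_eq0.
by move/expR_gt1Dx; rewrite lnK ?posrE // ltrBrDl.
Qed.

Lemma ln_divr (a b : R) : 0 < a -> 0 < b -> ln (a / b) = ln a - ln b.
Proof. by move=> a0 b0; rewrite ln_div ?posrE. Qed.

Lemma subr_lt_mul_ln_div (a b : R) : 0 < a -> 0 < b -> a != b ->
  a - b < a * ln (a / b).
Proof.
move=> a0 b0 ab; have ba1 : b / a != 1.
  by apply: contraNneq ab => /divr1_eq ->.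
have := ln_lt_subr1 (divr_gt0 b0 a0) ba1.
rewrite -(ltr_pM2l a0) mulrBr mulr1 mulrCA divff ?gt_eqF // mulr1.
by rewrite !ln_divr //; lra.
Qed.

Lemma subr_le_mul_ln_div (a b : R) : 0 < a -> 0 < b -> a - b <= a * ln (a / b).
Proof.
move=> a0 b0; have [->|ab] := eqVneq a b.
  by rewrite divff ?gt_eqF // ln1 mulr0 subrr.
exact/ltW/subr_lt_mul_ln_div.
Qed.

Lemma mul_ln_div_le (a b : R) : 0 < a -> 0 < b ->
  a * ln (a / b) <= (a - b) ^+ 2 / b + (a - b).
Proof.
move=> a0 b0; have := ln_le_subr1 (divr_gt0 a0 b0).
rewrite -(ler_pM2l a0) => /le_trans; apply.
by rewrite le_eqVlt; apply/orP; left; apply/eqP; field; rewrite gt_eqF.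
Qed.

Lemma exists_pos_lower_bound n (Q : 'I_n -> R) : (forall j, 0 < Q j) ->
  exists2 d, 0 < d & forall j, d <= Q j.
Proof.
move=> Q0; exists (\big[Num.min/1]_(j < n) Q j).
  by elim/big_ind: _ => // x y x0 y0; rewrite lt_min x0 y0.
by move=> j; rewrite (bigD1 j) //= ge_min lexx.
Qed.

Lemma simplex_le1 n (p : 'I_n -> R) j : in_simplex p -> p j <= 1.
Proof.
case=> p0 <-; rewrite (bigD1 j) //= lerDl.
by apply: sumr_ge0 => i _; apply: ltW.
Qed.

Lemma KL_ge0 n (X Y : 'I_n -> R) : in_simplex X -> in_simplex Y -> 0 <= KL X Y.
Proof.
move=> [X0 X1] [Y0 Y1]; rewrite -(subrr 1) -{1}X1 -Y1 -sumrB.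
by apply: ler_sum => j _; apply: subr_le_mul_ln_div.
Qed.

Lemma KL_eq0 n (X Y : 'I_n -> R) : in_simplex X -> in_simplex Y ->
  KL X Y = 0 -> X = Y.
Proof.
move=> [X0 X1] [Y0 Y1] KL0; apply/funext => j; apply/eqP/negPn/negP => XYj.
have excess k : 0 <= X k * ln (X k / Y k) - (X k - Y k).
  by rewrite subr_ge0 subr_le_mul_ln_div.
have : \sum_(k < n) (X k * ln (X k / Y k) - (X k - Y k)) = 0.
  by rewrite sumrB -/(KL X Y) KL0 sumrB X1 Y1 !subrr.
rewrite (bigD1 j) //=; apply/eqP; rewrite gt_eqF // ltr_pwDl ?sumr_ge0 //.
by rewrite subr_gt0 subr_lt_mul_ln_div.
Qed.

Lemma KL_self n (X : 'I_n -> R) : KL X X = 0.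
Proof.
apply: big1 => j _; have [->|Xj] := eqVneq (X j) 0; first by rewrite mul0r.
by rewrite divff // ln1 mulr0.
Qed.

Lemma KL_le_chi2 n (X Y : 'I_n -> R) : (forall j, 0 < X j) -> (forall j, 0 < Y j) ->
  \sum_(j < n) X j = \sum_(j < n) Y j ->
  KL X Y <= \sum_(j < n) (X j - Y j) ^+ 2 / Y j.
Proof.
move=> X0 Y0 XY; apply: le_trans (ler_sum _ (fun j _ => mul_ln_div_le (X0 j) (Y0 j))) _.
by rewrite big_split /= sumrB XY subrr addr0.
Qed.

Lemma KL_change_ref n (Z X Y : 'I_n -> R) : (forall j, 0 < Z j) ->
  (forall j, 0 < X j) -> (forall j, 0 < Y j) ->
  KL Z Y - KL Z X = \sum_(j < n) Z j * ln (X j / Y j).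
Proof.
move=> Z0 X0 Y0; rewrite -sumrB; apply: eq_bigr => j _.
by rewrite -mulrBr !ln_divr //; congr (_ * _); lra.
Qed.

Section Combinations.
Variables (m n : nat) (P : 'I_m -> 'I_n -> R).
Hypothesis P_gt0 : forall i j, 0 < P i j.

Lemma sum_KL_gap_comb (lam : 'I_m -> R) (X Y : 'I_n -> R) :
  (forall j, 0 < X j) -> (forall j, 0 < Y j) -> comb P lam = X ->
  \sum_(i < m) lam i * (KL (P i) Y - KL (P i) X) = KL X Y.
Proof.
move=> X0 Y0 lamX; under eq_bigr => i _ do rewrite KL_change_ref ?mulr_sumr //.
rewrite exchange_big /KL; apply: eq_bigr => j _ /=; rewrite -{2}lamX /comb mulr_suml.
by apply: eq_bigr => i _; rewrite mulrA.
Qed.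

Lemma sum_KL_gap_comb2 (lam mu : 'I_m -> R) (X Y : 'I_n -> R) :
  (forall j, 0 < X j) -> (forall j, 0 < Y j) -> comb P lam = X -> comb P mu = Y ->
  \sum_(i < m) (lam i - mu i) * (KL (P i) Y - KL (P i) X) = KL X Y + KL Y X.
Proof.
move=> X0 Y0 lamX muY.
rewrite -(sum_KL_gap_comb X0 Y0 lamX) -(sum_KL_gap_comb Y0 X0 muY) -big_split.
by apply: eq_bigr => i _ /=; ring.
Qed.

Lemma mutual_infoE (lam : 'I_m -> R) :
  mutual_info P lam = \sum_(i < m) lam i * KL (P i) (comb P lam).
Proof.
apply: eq_bigr => i _; rewrite mulr_sumr.
by apply: eq_bigr => j _; rewrite mulrA.
Qed.

Lemma mutual_info_addKL (lam : 'I_m -> R) (Q : 'I_n -> R) :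
  (forall j, 0 < comb P lam j) -> (forall j, 0 < Q j) ->
  mutual_info P lam + KL (comb P lam) Q = \sum_(i < m) lam i * KL (P i) Q.
Proof.
move=> C0 Q0; rewrite mutual_infoE -(sum_KL_gap_comb C0 Q0 erefl) -big_split.
by apply: eq_bigr => i _ /=; ring.
Qed.

End Combinations.

Lemma comb_simplex m n (P : 'I_m -> 'I_n -> R) (lam : 'I_m -> R) :
  (forall i, in_simplex (P i)) -> in_csimplex lam -> in_simplex (comb P lam).
Proof.
move=> HP [lam0 lam1]; split=> [j|].
  have [d d0 dP] := exists_pos_lower_bound (fun i => (HP i).1 j).
  apply: (lt_le_trans d0); rewrite -[d]mul1r -lam1 mulr_suml.
  by apply: ler_sum => i _; apply: ler_wpM2l.
rewrite /comb exchange_big /= -lam1; apply: eq_bigr => i _.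
by rewrite -mulr_sumr (HP i).2 mulr1.
Qed.

Definition unit_coord m (k : 'I_m) : 'I_m -> R := fun i => (i == k)%:R.

Lemma sum_unit_coord m (k : 'I_m) : \sum_(i < m) unit_coord k i = 1.
Proof.
rewrite (bigD1 k) //= big1 => [|i /negbTE ik]; last by rewrite /unit_coord ik.
by rewrite /unit_coord eqxx addr0.
Qed.

Lemma comb_unit_coord m n (P : 'I_m -> 'I_n -> R) (k : 'I_m) :
  comb P (unit_coord k) = P k.
Proof.
apply/funext => j; rewrite /comb (bigD1 k) //= big1 => [|i /negbTE ik].
  by rewrite /unit_coord eqxx mul1r addr0.
by rewrite /unit_coord ik mul0r.
Qed.

Section GeneralPosition.
Variables (m n : nat) (P : 'I_m.+1 -> 'I_n -> R).
Hypothesis gpP : general_position P.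

Lemma comb_inj (a b : 'I_m.+1 -> R) : \sum_i a i = 1 -> \sum_i b i = 1 ->
  comb P a = comb P b -> a = b.
Proof.
move=> a1 b1 ab; pose c i := a i - b i.
have c0 : \sum_i c i = 0 by rewrite sumrB a1 b1 subrr.
have cP j : \sum_i c i * P i j = 0.
  have := congr1 (fun f => f j) ab; rewrite /comb => abj.
  by rewrite /c; under eq_bigr => i _ do rewrite mulrBl; rewrite sumrB abj subrr.
have c0' : forall i, i != ord0 -> c i = 0.
  apply: gpP => j.
  have : \sum_i c i * (P i j - P ord0 j) = 0.
    under eq_bigr => i _ do rewrite mulrBr.
    by rewrite sumrB cP -mulr_suml c0 mul0r subrr.
  by rewrite (bigD1 ord0) //= subrr mulr0 add0r.
have c00 : c ord0 = 0.
  by move: c0; rewrite (bigD1 ord0) //= big1 ?addr0.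
apply/funext => i; apply/eqP; rewrite -subr_eq0; apply/eqP.
by have [->|/c0'] := eqVneq i ord0.
Qed.

Lemma rows_neq (a b : 'I_m.+1) : a != b -> P a != P b.
Proof.
move=> ab; apply: contra_neq ab => Pab.
have := comb_inj (sum_unit_coord a) (sum_unit_coord b).
rewrite !comb_unit_coord => /(_ Pab)/(congr1 (fun f => f a)).
by rewrite /unit_coord eqxx; case: eqP => // _ /eqP; rewrite eqr_nat.
Qed.

Lemma barycentric_in_L_support S (Q : 'I_n -> R) (lam : 'I_m.+1 -> R) :
  in_L P S Q -> barycentric P Q lam -> forall i, i \notin S -> lam i = 0.
Proof.
move=> [[mu [mu_supp [mu1 muQ]]] _] [lam1 lamQ].
by rewrite (comb_inj lam1 mu1 _) // -lamQ.
Qed.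

End GeneralPosition.

Lemma linear_coef_eq0 (d K g : R) : 0 < d ->
  (forall t, `|t| < d -> 0 <= t * g + t ^+ 2 * K) -> g = 0.
Proof.
move=> d0 quad_ge0; apply/eqP/negPn/negP => g0.
pose s := (`|K| + 1 + `|g| / d)^-1.
have D0 : 0 < `|K| + 1 + `|g| / d.
  by rewrite -addrA ltr_pwDr // ltr_pwDl ?divr_ge0 // ltW.
have s0 : 0 < s by rewrite invr_gt0.
have sg : `|- g * s| < d.
  rewrite normrM normrN gtr0_norm // ltr_pdivrMr // mulrDr mulrCA divff ?gt_eqF //.
  by rewrite mulr1 ltrDr mulr_gt0.
have sK : s * K < 1.
  rewrite -(ltr_pM2r D0) mul1r mulrAC mulVf ?gt_eqF // mul1r.
  by rewrite -addrA ltr_pwDr ?ler_norm // ltr_pwDl ?divr_ge0 // ltW.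
have := quad_ge0 _ sg; apply/negP; rewrite -ltNge.
have -> : - g * s * g + (- g * s) ^+ 2 * K = - (g ^+ 2 * s * (1 - s * K)) by ring.
have g2 : 0 < g ^+ 2 by rewrite lt_def sqrf_eq0 g0 sqr_ge0.
by rewrite oppr_lt0 mulr_gt0 ?subr_gt0 // mulr_gt0.
Qed.

Lemma addr_pos_mul_small (q e t d : R) : e <= q -> `|t| < e -> `|d| <= 1 ->
  0 < q + t * d.
Proof.
move=> eq te d1; have : `|t * d| <= `|t| by rewrite normrM ler_piMr.
by have := ler_norm (- (t * d)); rewrite normrN; lra.
Qed.

Lemma in_L_shift m n (P : 'I_m -> 'I_n -> R) S (Q : 'I_n -> R) (i k : 'I_m) (t : R) :
  in_L P S Q -> i \in S -> k \in S ->
  in_simplex (fun j => Q j + t * (P i j - P k j)) ->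
  in_L P S (fun j => Q j + t * (P i j - P k j)).
Proof.
move=> [[lam [lam_supp [lam1 lamQ]]] _] iS kS Qt; split=> //.
exists (fun l => lam l + t * (unit_coord i l - unit_coord k l)); split; [|split].
- move=> l lS; have li : (l == i) = false by apply: contraNF lS => /eqP ->.
  have lk : (l == k) = false by apply: contraNF lS => /eqP ->.
  by rewrite lam_supp // /unit_coord li lk subrr mulr0 addr0.
- by rewrite big_split /= -mulr_sumr sumrB !sum_unit_coord lam1 subrr mulr0 addr0.
- apply/funext => j; rewrite lamQ -(comb_unit_coord P i) -(comb_unit_coord P k).
  rewrite /comb -sumrB mulr_sumr -big_split; apply: eq_bigr => l _ /=.
  by rewrite mulrDl -mulrA mulrBl.
Qed.

Lemma proj_KL_gap m n (P : 'I_m -> 'I_n -> R) S (Q' Q : 'I_n -> R) (i k : 'I_m) :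
  (forall l, in_simplex (P l)) -> in_simplex Q' -> is_proj P S Q' Q ->
  i \in S -> k \in S ->
  KL (P i) Q' - KL (P i) Q = KL (P k) Q' - KL (P k) Q.
Proof.
move=> HP [Q'0 _] [LQ Qmin] iS kS; have [Q0 Q1] := LQ.2.
have P0 l j : 0 < P l j by case: (HP l).
pose d j := P i j - P k j.
pose g := \sum_(j < n) d j * ln (Q j / Q' j).
have gE : KL (P i) Q' - KL (P i) Q - (KL (P k) Q' - KL (P k) Q) = g.
  by rewrite !KL_change_ref // -sumrB; apply: eq_bigr => j _; rewrite mulrBl.
suff g0 : g = 0 by apply/eqP; rewrite -subr_eq0 gE g0.
pose K := \sum_(j < n) d j ^+ 2 / Q j.
have [dQ dQ0 dQ_le] := exists_pos_lower_bound Q0.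
(* Moving Q along P^i - P^k stays in L, so minimality of KL Q Q' kills the
   first-order term g of the variation. *)
apply: (@linear_coef_eq0 dQ K) => // t t_small.
pose Qt j := Q j + t * d j.
have Qt0 j : 0 < Qt j.
  apply: addr_pos_mul_small (dQ_le j) t_small _; rewrite ler_norml /d.
  have := simplex_le1 j (HP i); have := simplex_le1 j (HP k).
  by have := P0 i j; have := P0 k j; lra.
have Qt1 : \sum_(j < n) Qt j = 1.
  by rewrite big_split /= -mulr_sumr sumrB (HP i).2 (HP k).2 subrr mulr0 addr0.
have := Qmin Qt (in_L_shift LQ iS kS (conj Qt0 Qt1)).
have shift : KL Qt Q' - KL Qt Q = KL Q Q' + t * g.
  rewrite KL_change_ref // /KL /g mulr_sumr -big_split; apply: eq_bigr => j _ /=.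
  by rewrite /Qt mulrDl mulrA.
have chi2 : KL Qt Q <= t ^+ 2 * K.
  apply: le_trans (KL_le_chi2 Qt0 Q0 _) _; first by rewrite Qt1.
  rewrite /K mulr_sumr le_eqVlt; apply/orP; left; apply/eqP.
  by apply: eq_bigr => j _; rewrite /Qt addrAC subrr add0r exprMn [RHS]mulrA.
by move=> ?; lra.
Qed.

Lemma proj_equidistant m n (P : 'I_m -> 'I_n -> R) S (Q' Q : 'I_n -> R) (i k : 'I_m) :
  (forall l, in_simplex (P l)) -> in_simplex Q' -> is_proj P S Q' Q ->
  i \in S -> k \in S -> KL (P i) Q' = KL (P k) Q' -> KL (P i) Q = KL (P k) Q.
Proof. by move=> HP HQ' HQ iS kS; have := proj_KL_gap HP HQ' HQ iS kS; lra. Qed.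

Lemma KL_gap_le_at_negative_coord m n (P : 'I_m -> 'I_n -> R) (T : {set 'I_m})
    (b : 'I_m) (lam mu : 'I_m -> R) (X Y : 'I_n -> R) (a c : R) :
  (forall i j, 0 < P i j) -> in_simplex X -> in_simplex Y ->
  comb P lam = X -> comb P mu = Y -> \sum_i lam i = 1 -> \sum_i mu i = 1 ->
  (forall i, i \notin b |: T -> lam i = 0) -> (forall i, i \notin T -> mu i = 0) ->
  (forall i, i \in T -> KL (P i) X = a) -> (forall i, i \in T -> KL (P i) Y = c) ->
  lam b < 0 -> KL (P b) Y - KL (P b) X <= c - a.
Proof.
move=> P0 HX HY lamX muY lam1 mu1 lam0 mu0 KLX KLY lamb.
pose w i := KL (P i) Y - KL (P i) X - (c - a).
have : \sum_i (lam i - mu i) * w i = KL X Y + KL Y X.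
  rewrite -(sum_KL_gap_comb2 P0 HX.1 HY.1 lamX muY).
  under eq_bigr => i _ do rewrite /w mulrBr.
  by rewrite sumrB -mulr_suml sumrB lam1 mu1 subrr mul0r subr0.
rewrite (bigD1 b) //= big1 => [|i ib]; last first.
  have [iT|iT] := boolP (i \in T); last by rewrite lam0 ?mu0 ?subrr ?mul0r // in_setU1 negb_or ib.
  by rewrite /w KLX ?KLY // subrr mulr0.
have [bT|bT] := boolP (b \in T); first by rewrite KLX ?KLY // lexx.
rewrite addr0 mu0 // subr0 => wb; rewrite -subr_le0 -/(w b) -(nmulr_rge0 _ lamb) wb.
by rewrite addr_ge0 ?KL_ge0.
Qed.

Lemma KL_rows_gt0 m n (P : 'I_m.+1 -> 'I_n -> R) (k l : 'I_m.+1) :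
  (forall i, in_simplex (P i)) -> general_position P -> k != l -> 0 < KL (P k) (P l).
Proof.
move=> HP gpP kl; rewrite lt_def KL_ge0 // andbT.
by apply: contra_neq (rows_neq gpP kl); apply: KL_eq0.
Qed.

Lemma coord_ge0_of_equidistant_pair m n (P : 'I_m.+1 -> 'I_n -> R)
    (k l : 'I_m.+1) (mu : 'I_m.+1 -> R) (Y : 'I_n -> R) :
  (forall i, in_simplex (P i)) -> general_position P -> k != l ->
  in_simplex Y -> comb P mu = Y -> \sum_i mu i = 1 ->
  (forall i, i != k -> i != l -> mu i = 0) -> KL (P k) Y = KL (P l) Y -> 0 <= mu l.
Proof.
move=> HP gpP kl HY muY mu1 mu0 KLkl.
have P0 i j : 0 < P i j by case: (HP i).
have lk : l != k by rewrite eq_sym.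
have := sum_KL_gap_comb2 P0 (HP k).1 HY.1 (comb_unit_coord P k) muY.
rewrite (bigD1 k) // (bigD1 l) //= big1 => [|i /andP[ik il]]; last first.
  by rewrite /unit_coord (negbTE ik) mu0 // subrr mul0r.
move: mu1; rewrite (bigD1 k) // (bigD1 l) //= big1 => [|i /andP[ik il]]; last exact: mu0.
rewrite /unit_coord eqxx (negbTE lk) /= KL_self KLkl !addr0 => mu1.
have -> : mu k = 1 - mu l by lra.
have Dkl := KL_rows_gt0 HP gpP lk.
have KLsum_ge0 : 0 <= KL (P k) Y + KL Y (P k) by rewrite addr_ge0 ?KL_ge0.
rewrite -(pmulr_lge0 _ Dkl); lra.
Qed.

Lemma capacity_of_KKT m n (P : 'I_m -> 'I_n -> R) (mu : 'I_m -> R)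
    (Q : 'I_n -> R) (c : R) :
  (forall i, in_simplex (P i)) -> in_csimplex mu -> comb P mu = Q ->
  (forall i, KL (P i) Q <= c) -> (forall i, 0 < mu i -> KL (P i) Q = c) ->
  capacity_output P Q /\ is_capacity P c.
Proof.
move=> HP mu_cs muQ KL_le KL_eq.
have P0 i j : 0 < P i j by case: (HP i).
have HQ : in_simplex Q by rewrite -muQ; apply: comb_simplex.
have Q0 := HQ.1.
have bound lam : in_csimplex lam -> mutual_info P lam + KL (comb P lam) Q <= c.
  move=> lam_cs; have [C0 _] := comb_simplex HP lam_cs.
  rewrite mutual_info_addKL //.
  rewrite -[c]mul1r -lam_cs.2 mulr_suml; apply: ler_sum => i _.
  by rewrite ler_wpM2l ?(lam_cs.1 i).
have I_le lam : in_csimplex lam -> mutual_info P lam <= c.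
  move=> lam_cs; have := bound lam lam_cs.
  by have := KL_ge0 (comb_simplex HP lam_cs) HQ; lra.
have I_mu : mutual_info P mu = c.
  have := @mutual_info_addKL _ _ _ P0 mu Q; rewrite muQ KL_self addr0 => -> //.
  rewrite -[RHS]mul1r -mu_cs.2 mulr_suml; apply: eq_bigr => i _.
  have [->|mu_neq0] := eqVneq (mu i) 0; first by rewrite !mul0r.
  by rewrite KL_eq // lt_neqAle eq_sym mu_neq0 mu_cs.1.
split; split.
- by exists mu; split=> //; split=> // lam /I_le; rewrite I_mu.
- move=> lam lam_cs lam_max; have Clam := comb_simplex HP lam_cs.
  apply: (KL_eq0 Clam HQ); apply/le_anti; rewrite KL_ge0 // andbT.
  by have := bound lam lam_cs; have := lam_max mu mu_cs; rewrite I_mu; lra.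
- by exists mu.
- exact: I_le.
Qed.

Lemma KL_le_at_negative_proj_coord m n (P : 'I_m.+1 -> 'I_n -> R)
    (T : {set 'I_m.+1}) (b : 'I_m.+1) (Q' X Y : 'I_n -> R) (lam mu : 'I_m.+1 -> R) (c : R) :
  (forall i, in_simplex (P i)) -> general_position P -> in_simplex Q' ->
  is_proj P (b |: T) Q' X -> (forall i, i \in T -> KL (P i) Q' = KL (P b) Q') ->
  barycentric P X lam -> lam b < 0 ->
  in_simplex Y -> comb P mu = Y -> \sum_i mu i = 1 ->
  (forall i, i \notin T -> mu i = 0) -> (forall i, i \in T -> KL (P i) Y = c) ->
  KL (P b) Y <= c.
Proof.
move=> HP gpP HQ' projX equid [lam1 lamX] lamb HY muY mu1 mu0 KLY.
have P0 i j : 0 < P i j by case: (HP i).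
have KLX i : i \in T -> KL (P i) X = KL (P b) X.
  by move=> iT; apply: (proj_equidistant HP HQ' projX); rewrite ?setU11 ?setU1r ?equid.
have lam0 := barycentric_in_L_support gpP projX.1 (conj lam1 lamX).
have := KL_gap_le_at_negative_coord P0 projX.1.2 HY (esym lamX) muY lam1 mu1
  lam0 mu0 KLX KLY lamb.
by move=> ?; lra.
Qed.

Lemma ord4P (i : 'I_4) : [\/ i = r1, i = r2, i = r3 | i = r4].
Proof.
by case: i => [[|[|[|[|k]]]] ki] //; [apply: Or41|apply: Or42|apply: Or43|apply: Or44];
  apply: val_inj.
Qed.

End Divergence.

Theorem theorem21 (R : realType) (n : nat) (P : 'I_4 -> 'I_n -> R)
  (Q0 Q11 Q12 Q2 : 'I_n -> R) (lam0 lam11 lam12 : 'I_4 -> R) :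
  (forall i, in_simplex (P i)) ->
  general_position P ->
  equidistant P Q0 -> barycentric P Q0 lam0 ->
  lam0 r1 < 0 -> lam0 r2 < 0 -> 0 <= lam0 r3 -> 0 <= lam0 r4 ->
  is_proj P [set r2; r3; r4] Q0 Q11 ->
  is_proj P [set r1; r3; r4] Q0 Q12 ->
  barycentric P Q11 lam11 -> barycentric P Q12 lam12 ->
  lam12 r1 < 0 ->
  lam11 r2 < 0 -> 0 <= lam11 r3 -> 0 <= lam11 r4 ->
  is_proj P [set r3; r4] Q11 Q2 ->
  capacity_output P Q2 /\ is_capacity P (KL (P r3) Q2).
Proof.
move=> HP gpP [[_ HQ0] equid] _ _ _ _ _ pr11 pr12 bary11 bary12 lam12_1 lam11_2 _ _ pr2.
have set3 a : [set a; r3; r4] = a |: [set r3; r4] by apply/setP => i; rewrite !inE orbA.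
rewrite !set3 in pr11 pr12.
have [[mu [mu_supp [mu1 /esym muQ]]] HQ2] := pr2.1.
have eq2 i : i \in [set r3; r4] -> KL (P i) Q2 = KL (P r3) Q2.
  move=> iT; apply: (proj_equidistant HP pr11.1.2 pr2) => //; first by rewrite !inE eqxx.
  apply: (proj_equidistant HP HQ0 pr11); [exact: setU1r | | exact: equid].
  by rewrite !inE eqxx orbT.
have KL1 := KL_le_at_negative_proj_coord HP gpP HQ0 pr12 (fun i _ => equid i r1)
  bary12 lam12_1 HQ2 muQ mu1 mu_supp eq2.
have KL2 := KL_le_at_negative_proj_coord HP gpP HQ0 pr11 (fun i _ => equid i r2)
  bary11 lam11_2 HQ2 muQ mu1 mu_supp eq2.
have mu_pair i : i != r3 -> i != r4 -> mu i = 0.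
  by move=> i3 i4; apply: mu_supp; rewrite !inE negb_or i3 i4.
have eq34 : KL (P r3) Q2 = KL (P r4) Q2 by rewrite eq2 // !inE eqxx orbT.
have mu3 := coord_ge0_of_equidistant_pair HP gpP (isT : r4 != r3) HQ2 muQ mu1
  (fun i i4 i3 => mu_pair i i3 i4) (esym eq34).
have mu4 := coord_ge0_of_equidistant_pair HP gpP (isT : r3 != r4) HQ2 muQ mu1 mu_pair eq34.
apply: (capacity_of_KKT HP _ muQ).
- by split=> // i; case: (ord4P i) => ->; rewrite // mu_pair.
- by move=> i; case: (ord4P i) => ->; rewrite -?eq34.
- move=> i mu_gt0; apply: eq2; apply: contraTT mu_gt0 => /mu_supp ->.
  by rewrite ltxx.
Qed.
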